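(* Let $\alpha,\beta:[0,1]\to X$ be paths from $x_0$ to $x_1$ and let $A$ be a homotopy cut-set for $\alpha$ and $\beta$. (1) If $x_0\notin\mathbf{aw}(X)$, there is a homotopy cut-set $B\subseteq A$ for $\alpha,\beta$ in which $0$ is an isolated point. (2) If $x_1\notin\mathbf{aw}(X)$, there is a homotopy cut-set $B\subseteq A$ for $\alpha,\beta$ in which $1$ is an isolated point. (3) If $x_0,x_1\notin\mathbf{aw}(X)$, there is a homotopy cut-set $B\subseteq A$ for $\alpha,\beta$ in which both $0$ and $1$ are isolated points.
   Context: $\simeq$ is path-homotopy. A loop is trivial if path-homotopic to a constant loop. A sequence of loops $\alpha_n$ based at $x$ is a null-sequence if every neighborhood of $x$ contains $\alpha_n([0,1])$ for all but finitely many $n$. $\mathbf{aw}(X)=\{x\in X\mid \text{there is a null-sequence of non-trivial loops based at }x\}$. For paths $\alpha,\beta:[s,t]\to X$, a set $A\subseteq[s,t]$ is a homotopy cut-set for $\alpha,\beta$ if $A$ is closed, nowhere dense, contains $\{s,t\}$, $\alpha|_A=\beta|_A$, and $\alpha|_{[a,b]}\simeq\beta|_{[a,b]}$ for every component $(a,b)$ of $[s,t]\setminus A$. *)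

From Stdlib Require Import Reals.
Open Scope R_scope.

Record TopSpace := {
  carrier :> Type;
  is_open : (carrier -> Prop) -> Prop;
  open_full : is_open (fun _ => True);
  open_inter : forall U V, is_open U -> is_open V -> is_open (fun x => U x /\ V x);
  open_union : forall (F : (carrier -> Prop) -> Prop),
      (forall U, F U -> is_open U) -> is_open (fun x => exists U, F U /\ U x)
}.

Definition Icc (s t : R) (r : R) : Prop := s <= r <= t.

Definition continuous_on {X : TopSpace} (s t : R) (f : R -> X) : Prop :=
  forall r, Icc s t r -> forall U, is_open X U -> U (f r) ->
    exists d, d > 0 /\ forall r', Icc s t r' -> Rabs (r' - r) < d -> U (f r').

Definition continuous_on2 {X : TopSpace} (s t : R) (H : R -> R -> X) : Prop :=
  forall r u, Icc s t r -> Icc 0 1 u -> forall U, is_open X U -> U (H r u) ->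
    exists d, d > 0 /\ forall r' u', Icc s t r' -> Icc 0 1 u' ->
      Rabs (r' - r) < d -> Rabs (u' - u) < d -> U (H r' u').

Definition is_path {X : TopSpace} (s t : R) (f : R -> X) : Prop := continuous_on s t f.

Definition path_homotopic {X : TopSpace} (s t : R) (f g : R -> X) : Prop :=
  is_path s t f /\ is_path s t g /\
  exists H : R -> R -> X,
    continuous_on2 s t H /\
    (forall r, Icc s t r -> H r 0 = f r) /\
    (forall r, Icc s t r -> H r 1 = g r) /\
    (forall u, Icc 0 1 u -> H s u = f s) /\
    (forall u, Icc 0 1 u -> H t u = f t).

Definition is_loop {X : TopSpace} (x : X) (f : R -> X) : Prop :=
  is_path 0 1 f /\ f 0 = x /\ f 1 = x.

Definition trivial_loop {X : TopSpace} (x : X) (f : R -> X) : Prop :=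
  path_homotopic 0 1 f (fun _ => x).

Definition null_sequence {X : TopSpace} (x : X) (a : nat -> R -> X) : Prop :=
  (forall n, is_loop x (a n)) /\
  forall U, is_open X U -> U x ->
    exists N, forall n, (N <= n)%nat -> forall r, Icc 0 1 r -> U (a n r).

Definition aw (X : TopSpace) (x : X) : Prop :=
  exists a : nat -> R -> X, null_sequence x a /\ forall n, ~ trivial_loop x (a n).

Definition closed_R (A : R -> Prop) : Prop :=
  forall x, (forall e, e > 0 -> exists y, A y /\ Rabs (y - x) < e) -> A x.

Definition closure_R (A : R -> Prop) (x : R) : Prop :=
  forall e, e > 0 -> exists y, A y /\ Rabs (y - x) < e.

Definition interior_R (A : R -> Prop) (x : R) : Prop :=
  exists e, e > 0 /\ forall y, Rabs (y - x) < e -> A y.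

Definition nowhere_dense_R (A : R -> Prop) : Prop :=
  forall x, ~ interior_R (closure_R A) x.

(** (a,b) is a connected component of [s,t] \ A : a nonempty open interval
    contained in [s,t] \ A whose endpoints are not in [s,t] \ A (maximality). *)
Definition component_of_complement (s t : R) (A : R -> Prop) (a b : R) : Prop :=
  a < b /\
  (forall r, a < r < b -> Icc s t r /\ ~ A r) /\
  ~ (Icc s t a /\ ~ A a) /\
  ~ (Icc s t b /\ ~ A b).

Definition homotopy_cut_set {X : TopSpace} (s t : R) (f g : R -> X) (A : R -> Prop) : Prop :=
  (forall r, A r -> Icc s t r) /\
  closed_R A /\
  nowhere_dense_R A /\
  A s /\ A t /\
  (forall r, A r -> f r = g r) /\
  (forall a b, component_of_complement s t A a b -> path_homotopic a b f g).

Definition isolated_point (B : R -> Prop) (p : R) : Prop :=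
  B p /\ exists e, e > 0 /\ forall r, B r -> Rabs (r - p) < e -> r = p.

(* If [0] is not isolated in [A], points [t] of [A] approach [0], and the loops that run
   along [alpha] from [0] to [t] and back along [beta] form a null-sequence at [x0].  As
   [x0] is not in [aw X], one of them is null-homotopic, which turns into a homotopy
   between [alpha] and [beta] on [[0, t]].  Removing [(0, t)] from [A] then leaves a
   homotopy cut-set, the one new complementary component being [(0, t)] itself, in which
   [0] is isolated.  The endpoint [1] is symmetric, and (3) follows by treating [0] first
   and then [1]. *)

From Stdlib Require Import Reals Lra Psatz Classical IndefiniteDescription.
Open Scope R_scope.

Ltac piecewise_lra :=
  unfold Rmin, Rmax, Rabs in *;
  repeat match goal with
  | |- context [Rle_dec ?a ?b] => destruct (Rle_dec a b)
  | |- context [Rcase_abs ?a] => destruct (Rcase_abs a)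
  | H : context [Rle_dec ?a ?b] |- _ => destruct (Rle_dec a b)
  | H : context [Rcase_abs ?a] |- _ => destruct (Rcase_abs a)
  end; lra.

Lemma continuous_on_sub {X : TopSpace} a b c d (f : R -> X) :
  a <= c -> d <= b -> continuous_on a b f -> continuous_on c d f.
Proof.
  intros Hac Hdb Hf r Hr U HU HUr.
  destruct (Hf r ltac:(unfold Icc in *; lra) U HU HUr) as [del [Hdel Hnear]].
  exists del; split; [exact Hdel|].
  intros r' Hr' Hrr'; apply Hnear; [unfold Icc in *; lra | exact Hrr'].
Qed.

Lemma continuous_on_comp_lipschitz {X : TopSpace} a b c d K (f : R -> X) (phi : R -> R) :
  0 < K -> continuous_on a b f -> (forall r, Icc c d r -> Icc a b (phi r)) ->
  (forall r r', Icc c d r -> Icc c d r' -> Rabs (phi r' - phi r) <= K * Rabs (r' - r)) ->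
  continuous_on c d (fun r => f (phi r)).
Proof.
  intros HK Hf Hphi Hlip r Hr U HU HUr.
  destruct (Hf (phi r) (Hphi r Hr) U HU HUr) as [del [Hdel Hnear]].
  exists (del / K); split; [apply Rdiv_lt_0_compat; lra|].
  intros r' Hr' Hrr'. apply Hnear; [apply Hphi, Hr'|].
  apply Rle_lt_trans with (1 := Hlip r r' Hr Hr').
  replace del with (K * (del / K)) by (field; lra).
  apply Rmult_lt_compat_l; assumption.
Qed.

Lemma continuous_on2_comp_lipschitz {X : TopSpace} a b c d K (H : R -> R -> X)
    (p q : R -> R -> R) :
  0 < K -> continuous_on2 a b H ->
  (forall r u, Icc c d r -> Icc 0 1 u -> Icc a b (p r u) /\ Icc 0 1 (q r u)) ->
  (forall r u r' u', Icc c d r -> Icc 0 1 u -> Icc c d r' -> Icc 0 1 u' ->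
     Rabs (p r' u' - p r u) <= K * (Rabs (r' - r) + Rabs (u' - u)) /\
     Rabs (q r' u' - q r u) <= K * (Rabs (r' - r) + Rabs (u' - u))) ->
  continuous_on2 c d (fun r u => H (p r u) (q r u)).
Proof.
  intros HK HH Hpq Hlip r u Hr Hu U HU HUr.
  destruct (Hpq r u Hr Hu) as [Hp Hq].
  destruct (HH _ _ Hp Hq U HU HUr) as [del [Hdel Hnear]].
  exists (del / (2 * K)); split; [apply Rdiv_lt_0_compat; lra|].
  intros r' u' Hr' Hu' Hrr' Huu'.
  destruct (Hpq r' u' Hr' Hu') as [Hp' Hq'].
  destruct (Hlip r u r' u' Hr Hu Hr' Hu') as [Lp Lq].
  assert (Hsum : K * (Rabs (r' - r) + Rabs (u' - u)) < del).
  { replace del with (K * (del / (2 * K) + del / (2 * K))) by (field; lra).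
    apply Rmult_lt_compat_l; lra. }
  apply Hnear; auto; lra.
Qed.

Lemma continuous_on_glue {X : TopSpace} a m b (f g : R -> X) :
  continuous_on a m f -> continuous_on m b g -> f m = g m ->
  continuous_on a b (fun s => if Rle_dec s m then f s else g s).
Proof.
  intros Hf Hg Hfg r Hr U HU HUr. unfold Icc in *.
  destruct (Rtotal_order r m) as [Hlt|[Heq|Hgt]].
  - destruct (Rle_dec r m) in HUr; [|lra].
    destruct (Hf r ltac:(unfold Icc; lra) U HU HUr) as [del [Hdel Hnear]].
    exists (Rmin del (m - r)); split; [apply Rmin_pos; lra|].
    intros r' Hr' Hrr'. pose proof (Rmin_l del (m - r)). pose proof (Rmin_r del (m - r)).
    apply Rabs_def2 in Hrr'. destruct (Rle_dec r' m); [|lra].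
    apply Hnear; [unfold Icc; lra | apply Rabs_def1; lra].
  - subst r. destruct (Rle_dec m m) in HUr; [|lra].
    destruct (Hf m ltac:(unfold Icc; lra) U HU HUr) as [del1 [Hdel1 Hnear1]].
    rewrite Hfg in HUr.
    destruct (Hg m ltac:(unfold Icc; lra) U HU HUr) as [del2 [Hdel2 Hnear2]].
    exists (Rmin del1 del2); split; [apply Rmin_pos; lra|].
    intros r' Hr' Hrr'. pose proof (Rmin_l del1 del2). pose proof (Rmin_r del1 del2).
    apply Rabs_def2 in Hrr'. destruct (Rle_dec r' m).
    + apply Hnear1; [unfold Icc; lra | apply Rabs_def1; lra].
    + apply Hnear2; [unfold Icc; lra | apply Rabs_def1; lra].
  - destruct (Rle_dec r m) in HUr; [lra|].
    destruct (Hg r ltac:(unfold Icc; lra) U HU HUr) as [del [Hdel Hnear]].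
    exists (Rmin del (r - m)); split; [apply Rmin_pos; lra|].
    intros r' Hr' Hrr'. pose proof (Rmin_l del (r - m)). pose proof (Rmin_r del (r - m)).
    apply Rabs_def2 in Hrr'. destruct (Rle_dec r' m); [lra|].
    apply Hnear; [unfold Icc; lra | apply Rabs_def1; lra].
Qed.

(* [(walk_x u, walk_y u)] runs up the side [r = 0], along the top [u = 1] and down the
   side [r = 1] of the unit square, i.e. along the three sides on which a path-homotopy
   to a constant loop is constant. *)
Definition walk_x (u : R) : R := Rmax 0 (Rmin 1 (3 * u - 1)).
Definition walk_y (u : R) : R := Rmin 1 (Rmin (3 * u) (3 - 3 * u)).

Lemma walk_range u : Icc 0 1 u -> Icc 0 1 (walk_x u) /\ Icc 0 1 (walk_y u).
Proof. unfold walk_x, walk_y, Icc; intros; split; split; piecewise_lra. Qed.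

Lemma walk_lipschitz u u' :
  Rabs (walk_x u' - walk_x u) <= 3 * Rabs (u' - u) /\
  Rabs (walk_y u' - walk_y u) <= 3 * Rabs (u' - u).
Proof. unfold walk_x, walk_y; split; piecewise_lra. Qed.

Lemma walk_0 : walk_x 0 = 0 /\ walk_y 0 = 0.
Proof. unfold walk_x, walk_y; split; piecewise_lra. Qed.

Lemma walk_1 : walk_x 1 = 1 /\ walk_y 1 = 0.
Proof. unfold walk_x, walk_y; split; piecewise_lra. Qed.

Lemma square_walk_const {X : Type} (H : R -> R -> X) (x : X) :
  (forall u, Icc 0 1 u -> H 0 u = x) -> (forall r, Icc 0 1 r -> H r 1 = x) ->
  (forall u, Icc 0 1 u -> H 1 u = x) ->
  forall u, Icc 0 1 u -> H (walk_x u) (walk_y u) = x.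
Proof.
  intros Hleft Htop Hright u Hu.
  destruct (walk_range u Hu) as [Hx Hy]. unfold Icc in Hu.
  destruct (Rle_dec u (1/3)); [|destruct (Rle_dec u (2/3))].
  - replace (walk_x u) with 0 by (unfold walk_x; piecewise_lra). apply Hleft, Hy.
  - replace (walk_y u) with 1 by (unfold walk_y; piecewise_lra). apply Htop, Hx.
  - replace (walk_x u) with 1 by (unfold walk_x; piecewise_lra). apply Hright, Hy.
Qed.

Definition scaled_walk_x (l u : R) : R := 1/2 + l * (walk_x u - 1/2).
Definition scaled_walk_y (l u : R) : R := l * walk_y u.

Lemma scaled_walk_range l u : 0 <= l <= 1 -> Icc 0 1 u ->
  Icc 0 1 (scaled_walk_x l u) /\ Icc 0 1 (scaled_walk_y l u).
Proof.
  intros Hl Hu. destruct (walk_range u Hu) as [Hx Hy].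
  unfold scaled_walk_x, scaled_walk_y, Icc in *. split; split; nra.
Qed.

Lemma Rabs_mult_sub_le a a' b b' :
  Rabs (a' * b' - a * b) <= Rabs a' * Rabs (b' - b) + Rabs (a' - a) * Rabs b.
Proof.
  replace (a' * b' - a * b) with (a' * (b' - b) + (a' - a) * b) by ring.
  rewrite <- !Rabs_mult. apply Rabs_triang.
Qed.

Lemma scaled_walk_lipschitz l l' u u' : 0 <= l' <= 1 -> Icc 0 1 u ->
  Rabs (scaled_walk_x l' u' - scaled_walk_x l u) <= 3 * (Rabs (l' - l) + Rabs (u' - u)) /\
  Rabs (scaled_walk_y l' u' - scaled_walk_y l u) <= 3 * (Rabs (l' - l) + Rabs (u' - u)).
Proof.
  intros Hl' Hu. destruct (walk_range u Hu) as [Hx Hy].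
  destruct (walk_lipschitz u u') as [Lx Ly].
  pose proof (Rabs_pos (l' - l)). pose proof (Rabs_pos (u' - u)).
  rewrite <- (Rabs_pos_eq l') in Hl' by lra. unfold Icc in *.
  split.
  - unfold scaled_walk_x.
    replace (1/2 + l' * (walk_x u' - 1/2) - (1/2 + l * (walk_x u - 1/2)))
      with (l' * (walk_x u' - 1/2) - l * (walk_x u - 1/2)) by ring.
    eapply Rle_trans; [apply Rabs_mult_sub_le|].
    replace (walk_x u' - 1/2 - (walk_x u - 1/2)) with (walk_x u' - walk_x u) by ring.
    assert (Rabs (walk_x u - 1/2) <= 1) by piecewise_lra.
    pose proof (Rabs_pos (walk_x u' - walk_x u)). pose proof (Rabs_pos (walk_x u - 1/2)).
    nra.
  - unfold scaled_walk_y. eapply Rle_trans; [apply Rabs_mult_sub_le|].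
    assert (Rabs (walk_y u) <= 1) by piecewise_lra.
    pose proof (Rabs_pos (walk_y u' - walk_y u)). pose proof (Rabs_pos (walk_y u)).
    nra.
Qed.

Lemma scaled_walk_0 l : scaled_walk_x l 0 = (1 - l) / 2 /\ scaled_walk_y l 0 = 0.
Proof.
  unfold scaled_walk_x, scaled_walk_y; destruct walk_0 as [-> ->]; split; field.
Qed.

Lemma scaled_walk_1 l : scaled_walk_x l 1 = (1 + l) / 2 /\ scaled_walk_y l 1 = 0.
Proof.
  unfold scaled_walk_x, scaled_walk_y; destruct walk_1 as [-> ->]; split; field.
Qed.

Lemma scaled_walk_unit u : scaled_walk_x 1 u = walk_x u /\ scaled_walk_y 1 u = walk_y u.
Proof. unfold scaled_walk_x, scaled_walk_y; split; ring. Qed.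

Lemma scaled_walk_null u : scaled_walk_x 0 u = 1/2 /\ scaled_walk_y 0 u = 0.
Proof. unfold scaled_walk_x, scaled_walk_y; split; ring. Qed.

Definition lerp (a b c : R) : R := a + c * (b - a).
Definition unlerp (a b r : R) : R := (r - a) / (b - a).

Lemma lerp_range a b c : Icc 0 1 a -> Icc 0 1 b -> 0 <= c <= 1 -> Icc 0 1 (lerp a b c).
Proof. unfold lerp, Icc; intros; split; nra. Qed.

Lemma lerp_sub a b c c' : lerp a b c' - lerp a b c = (c' - c) * (b - a).
Proof. unfold lerp; ring. Qed.

Lemma lerp_lipschitz a b c c' : Icc 0 1 a -> Icc 0 1 b ->
  Rabs (lerp a b c' - lerp a b c) <= Rabs (c' - c).
Proof.
  intros Ha Hb. rewrite lerp_sub, Rabs_mult.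
  assert (Rabs (b - a) <= 1) by (unfold Icc in *; piecewise_lra).
  pose proof (Rabs_pos (c' - c)). nra.
Qed.

Lemma lerp_0 a b : lerp a b 0 = a.
Proof. unfold lerp; ring. Qed.

Lemma lerp_1 a b : lerp a b 1 = b.
Proof. unfold lerp; ring. Qed.

Lemma lerp_unlerp_rev a b r : a <> b -> lerp a b (1 - unlerp b a r) = r.
Proof. intros Hab; unfold lerp, unlerp; field; lra. Qed.

Lemma unlerp_range a b r : a <> b -> Icc (Rmin a b) (Rmax a b) r -> 0 <= unlerp a b r <= 1.
Proof.
  intros Hab Hr. assert (Hne : b - a <> 0) by lra.
  assert (Hmul : unlerp a b r * (b - a) = r - a) by (unfold unlerp; field; exact Hne).
  set (l := unlerp a b r) in *. unfold Icc, Rmin, Rmax in Hr.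
  destruct (Rle_dec a b); split; nra.
Qed.

Lemma unlerp_dist a b r r' : a <> b ->
  Rabs (unlerp a b r' - unlerp a b r) = Rabs (/ (b - a)) * Rabs (r' - r).
Proof.
  intros Hab. rewrite <- Rabs_mult. f_equal. unfold unlerp. field. lra.
Qed.

Definition out_back_loop {X : TopSpace} (al be : R -> X) (e t s : R) : X :=
  if Rle_dec s (1/2) then al (lerp e t (2 * s)) else be (lerp e t (2 * (1 - s))).

Section OutBackLoop.
Variables (X : TopSpace) (al be : R -> X) (e t : R).
Hypothesis (Hal : continuous_on 0 1 al) (Hbe : continuous_on 0 1 be).
Hypothesis (He : Icc 0 1 e) (Ht : Icc 0 1 t) (Htt : al t = be t).

Lemma out_back_loop_left s : s <= 1/2 -> out_back_loop al be e t s = al (lerp e t (2 * s)).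
Proof. intros; unfold out_back_loop; destruct Rle_dec; [reflexivity | lra]. Qed.

Lemma out_back_loop_right s : 1/2 <= s ->
  out_back_loop al be e t s = be (lerp e t (2 * (1 - s))).
Proof.
  intros Hs; unfold out_back_loop; destruct Rle_dec; [|reflexivity].
  replace s with (1/2) by lra.
  replace (2 * (1/2)) with 1 by field. replace (2 * (1 - 1/2)) with 1 by field.
  rewrite lerp_1; exact Htt.
Qed.

Lemma out_back_loop_0 : out_back_loop al be e t 0 = al e.
Proof. rewrite out_back_loop_left by lra. rewrite Rmult_0_r. apply f_equal, lerp_0. Qed.

Lemma out_back_loop_1 : out_back_loop al be e t 1 = be e.
Proof.
  rewrite out_back_loop_right by lra.
  replace (2 * (1 - 1)) with 0 by ring. apply f_equal, lerp_0.
Qed.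

Lemma out_back_loop_is_loop : al e = be e -> is_loop (al e) (out_back_loop al be e t).
Proof.
  intros Hee. split; [|split; [apply out_back_loop_0 | rewrite out_back_loop_1; auto]].
  assert (Hdouble : forall r r', Rabs (2 * r' - 2 * r) <= 2 * Rabs (r' - r))
    by (intros; piecewise_lra).
  unfold is_path, out_back_loop. apply continuous_on_glue.
  - apply (continuous_on_comp_lipschitz 0 1 0 (1/2) 2 al (fun s => lerp e t (2 * s)));
      auto; [lra | |].
    + intros r Hr; apply lerp_range; unfold Icc in *; auto; lra.
    + intros r r' _ _. eapply Rle_trans; [apply lerp_lipschitz; auto | apply Hdouble].
  - apply (continuous_on_comp_lipschitz 0 1 (1/2) 1 2 be (fun s => lerp e t (2 * (1 - s))));
      auto; [lra | |].
    + intros r Hr; apply lerp_range; unfold Icc in *; auto; lra.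
    + intros r r' _ _. eapply Rle_trans; [apply lerp_lipschitz; auto|]. piecewise_lra.
  - replace (2 * (1/2)) with 1 by field. replace (2 * (1 - 1/2)) with 1 by field.
    rewrite lerp_1; exact Htt.
Qed.

End OutBackLoop.

Lemma out_back_loops_null {X : TopSpace} (al be : R -> X) e (t : nat -> R) :
  continuous_on 0 1 al -> continuous_on 0 1 be -> Icc 0 1 e -> al e = be e ->
  (forall n, Icc 0 1 (t n) /\ al (t n) = be (t n)) -> Un_cv t e ->
  null_sequence (al e) (fun n => out_back_loop al be e (t n)).
Proof.
  intros Hal Hbe He Hee Ht Hcv. split.
  { intro n; destruct (Ht n); apply out_back_loop_is_loop; auto. }
  intros U HU HUe.
  destruct (Hal e He U HU HUe) as [d1 [Hd1 Hnear1]].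
  rewrite Hee in HUe. destruct (Hbe e He U HU HUe) as [d2 [Hd2 Hnear2]].
  destruct (Hcv (Rmin d1 d2) ltac:(apply Rmin_pos; auto)) as [N HN].
  exists N. intros n Hn s Hs. destruct (Ht n) as [Htn Heqn].
  specialize (HN n Hn). unfold R_dist in HN.
  pose proof (Rmin_l d1 d2). pose proof (Rmin_r d1 d2).
  assert (Hnear : forall c, 0 <= c <= 1 ->
            Icc 0 1 (lerp e (t n) c) /\ Rabs (lerp e (t n) c - e) < Rmin d1 d2).
  { intros c Hc. split; [apply lerp_range; auto|].
    rewrite <- (lerp_0 e (t n)) at 2. rewrite lerp_sub, Rabs_mult, Rminus_0_r.
    pose proof (Rabs_pos (t n - e)).
    rewrite (Rabs_pos_eq c) by lra. nra. }
  unfold Icc in Hs. destruct (Rle_dec s (1/2)).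
  - rewrite out_back_loop_left by lra.
    destruct (Hnear (2 * s) ltac:(lra)). apply Hnear1; auto; lra.
  - rewrite out_back_loop_right by (auto; lra).
    destruct (Hnear (2 * (1 - s)) ltac:(lra)). apply Hnear2; auto; lra.
Qed.

(* For fixed [r], [G r] runs the null-homotopy [H] of the loop along the left, top and
   right sides of the rectangle [[(1-l)/2, (1+l)/2] x [0, l]], [l = unlerp t e r].  Its
   bottom corners go to [al r] and [be r]; the three sides are those of the unit square,
   where [H] is constant, at [r = e], and collapse to [(1/2, 0)] at [r = t]. *)
Lemma out_back_loop_trivial_homotopic {X : TopSpace} (al be : R -> X) e t :
  continuous_on 0 1 al -> continuous_on 0 1 be -> Icc 0 1 e -> Icc 0 1 t -> e <> t ->
  al e = be e -> al t = be t -> trivial_loop (al e) (out_back_loop al be e t) ->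
  path_homotopic (Rmin e t) (Rmax e t) al be.
Proof.
  intros Hal Hbe He Ht Het Hee Htt [_ [_ [H [HH [Hbot [Htop [Hleft Hright]]]]]]].
  set (lam := unlerp t e).
  set (G := fun r u => H (scaled_walk_x (lam r) u) (scaled_walk_y (lam r) u)).
  assert (Hsub : 0 <= Rmin e t /\ Rmax e t <= 1) by (unfold Icc in *; piecewise_lra).
  assert (Hlam : forall r, Icc (Rmin e t) (Rmax e t) r -> 0 <= lam r <= 1).
  { intros r Hr; apply unlerp_range; auto; rewrite Rmin_comm, Rmax_comm; exact Hr. }
  assert (Gends : forall r u, (r = e \/ r = t) -> Icc 0 1 u -> G r u = al r).
  { intros r u [-> | ->] Hu; unfold G, lam.
    - replace (unlerp t e e) with 1 by (unfold unlerp; field; lra).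
      destruct (scaled_walk_unit u) as [-> ->]. apply (square_walk_const H); auto.
      + intros v Hv; rewrite Hleft by exact Hv. apply out_back_loop_0.
      + intros v Hv; rewrite Hright by exact Hv. rewrite out_back_loop_1; auto.
    - replace (unlerp t e t) with 0 by (unfold unlerp; field; lra).
      destruct (scaled_walk_null u) as [-> ->].
      rewrite Hbot by (unfold Icc; lra). rewrite out_back_loop_left by lra.
      replace (2 * (1/2)) with 1 by field. apply f_equal, lerp_1. }
  split; [apply (continuous_on_sub 0 1); tauto|].
  split; [apply (continuous_on_sub 0 1); tauto|].
  exists G. split; [|split; [|split; [|split]]].
  - apply (continuous_on2_comp_lipschitz 0 1 _ _ (3 * (1 + Rabs (/ (e - t)))) H
             (fun r u => scaled_walk_x (lam r) u) (fun r u => scaled_walk_y (lam r) u));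
      [pose proof (Rabs_pos (/ (e - t))); lra | exact HH | |].
    + intros r u Hr Hu; apply scaled_walk_range; auto.
    + intros r u r' u' Hr Hu Hr' Hu'.
      destruct (scaled_walk_lipschitz (lam r) (lam r') u u' (Hlam r' Hr') Hu) as [Lx Ly].
      unfold lam in *. rewrite unlerp_dist in Lx, Ly by lra.
      pose proof (Rabs_pos (/ (e - t))). pose proof (Rabs_pos (r' - r)).
      pose proof (Rabs_pos (u' - u)). split; nra.
  - intros r Hr. unfold G. destruct (scaled_walk_0 (lam r)) as [-> ->].
    pose proof (Hlam r Hr).
    rewrite Hbot by (unfold Icc; lra). rewrite out_back_loop_left by lra.
    replace (2 * ((1 - lam r) / 2)) with (1 - lam r) by field.
    unfold lam; rewrite lerp_unlerp_rev; auto.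
  - intros r Hr. unfold G. destruct (scaled_walk_1 (lam r)) as [-> ->].
    pose proof (Hlam r Hr).
    rewrite Hbot by (unfold Icc; lra). rewrite out_back_loop_right by (auto; lra).
    replace (2 * (1 - (1 + lam r) / 2)) with (1 - lam r) by field.
    unfold lam; rewrite lerp_unlerp_rev; auto.
  - intros u Hu. apply (Rmin_case e t (fun r => G r u = al r)); apply Gends; auto.
  - intros u Hu. apply (Rmax_case e t (fun r => G r u = al r)); apply Gends; auto.
Qed.

Definition cut_out (A : R -> Prop) (lo hi r : R) : Prop := A r /\ ~ (lo < r < hi).

Lemma closed_R_cut_out A lo hi : closed_R A -> closed_R (cut_out A lo hi).
Proof.
  intros HA x Hx. split.
  - apply HA. intros eps Heps. destruct (Hx eps Heps) as [y [[Ay _] Hy]]. eauto.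
  - intros Hlh. destruct (Hx (Rmin (x - lo) (hi - x))) as [y [[_ Hny] Hy]];
      [apply Rmin_pos; lra|].
    apply Hny. apply Rabs_def2 in Hy.
    pose proof (Rmin_l (x - lo) (hi - x)). pose proof (Rmin_r (x - lo) (hi - x)). lra.
Qed.

Lemma nowhere_dense_R_sub (A B : R -> Prop) :
  (forall r, B r -> A r) -> nowhere_dense_R A -> nowhere_dense_R B.
Proof.
  intros HBA HA x [eps [Heps Hint]]. apply (HA x). exists eps; split; [exact Heps|].
  intros y Hy d Hd. destruct (Hint y Hy d Hd) as [z [Bz Hz]]. eauto.
Qed.

Lemma component_of_complement_cut_out s t A lo hi a b :
  A lo -> A hi -> s <= lo -> hi <= t ->
  component_of_complement s t (cut_out A lo hi) a b ->
  (a = lo /\ b = hi) \/ component_of_complement s t A a b.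
Proof.
  intros Alo Ahi Hslo Hhit [Hab [Hin [Ha Hb]]].
  assert (Hlo_out : ~ (a < lo < b)).
  { intros Hlo. apply (proj2 (Hin lo Hlo)). split; [exact Alo | lra]. }
  assert (Hhi_out : ~ (a < hi < b)).
  { intros Hhi. apply (proj2 (Hin hi Hhi)). split; [exact Ahi | lra]. }
  destruct (classic (exists r, a < r < b /\ lo < r < hi)) as [[r [Hr Hrlh]]|Hdisj].
  - left. pose proof (proj1 (Hin r Hr)) as Ir. unfold Icc in Ir.
    split; apply NNPP; intros Hne.
    + destruct (Rlt_dec lo a); [|lra].
      apply Ha. split; [unfold Icc; lra|]. intros [_ Hn]; apply Hn; lra.
    + destruct (Rlt_dec b hi); [|lra].
      apply Hb. split; [unfold Icc; lra|]. intros [_ Hn]; apply Hn; lra.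
  - right. split; [exact Hab|]. split; [|split].
    + intros r Hr. destruct (Hin r Hr) as [Ir Hnr]. split; [exact Ir|].
      intros Ar. apply Hnr. split; [exact Ar|]. intros Hrlh. apply Hdisj; eauto.
    + intros [Ia Hna]. apply Ha. split; [exact Ia|]. intros [Aa _]; auto.
    + intros [Ib Hnb]. apply Hb. split; [exact Ib|]. intros [Ab _]; auto.
Qed.

Lemma homotopy_cut_set_cut_out {X : TopSpace} s t (f g : R -> X) A lo hi :
  homotopy_cut_set s t f g A -> A lo -> A hi -> path_homotopic lo hi f g ->
  homotopy_cut_set s t f g (cut_out A lo hi).
Proof.
  intros [HI [HC [HN [Hs [Ht [Heq Hcomp]]]]]] Alo Ahi Hlh.
  pose proof (HI lo Alo) as Ilo. pose proof (HI hi Ahi) as Ihi. unfold Icc in Ilo, Ihi.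
  split; [intros r [Ar _]; auto|].
  split; [apply closed_R_cut_out; exact HC|].
  split; [apply (nowhere_dense_R_sub A); [intros r [Ar _]; exact Ar | exact HN]|].
  split; [split; [exact Hs | lra]|].
  split; [split; [exact Ht | lra]|].
  split; [intros r [Ar _]; auto|].
  intros a b Hab.
  destruct (component_of_complement_cut_out s t A lo hi a b Alo Ahi ltac:(lra) ltac:(lra) Hab)
    as [[-> ->] | Hc]; auto.
Qed.

Lemma isolated_endpoint_cut_out (A : R -> Prop) s t e t' :
  (forall r, A r -> Icc s t r) -> (e = s \/ e = t) -> A e -> Icc s t t' -> t' <> e ->
  isolated_point (cut_out A (Rmin e t') (Rmax e t')) e.
Proof.
  intros HI He Ae It' Hne. split; [split; [exact Ae | piecewise_lra]|].
  exists (Rabs (t' - e)). split; [apply Rabs_pos_lt; lra|].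
  intros r [Ar Hout] Hr. pose proof (HI r Ar) as Ir.
  unfold Icc in *. apply NNPP; intros Hre. apply Hout. clear Hout HI Ar Ae.
  destruct He as [-> | ->]; split; piecewise_lra.
Qed.

Lemma isolated_point_sub (A B : R -> Prop) p :
  (forall r, B r -> A r) -> isolated_point A p -> B p -> isolated_point B p.
Proof.
  intros HBA [_ [eps [Heps Hiso]]] Bp. split; [exact Bp|]. exists eps; split; auto.
Qed.

Lemma not_isolated_point_approx (B : R -> Prop) p : B p -> ~ isolated_point B p ->
  forall eps, eps > 0 -> exists r, (B r /\ r <> p) /\ Rabs (r - p) < eps.
Proof.
  intros Bp Hniso eps Heps. apply NNPP; intros Hnone. apply Hniso.
  split; [exact Bp|]. exists eps; split; [exact Heps|].
  intros r Br Hr. apply NNPP; intros Hrp. eauto.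
Qed.

Lemma accumulation_sequence (P : R -> Prop) x :
  (forall eps, eps > 0 -> exists r, P r /\ Rabs (r - x) < eps) ->
  exists u : nat -> R, (forall n, P (u n)) /\ Un_cv u x.
Proof.
  intros Hacc.
  destruct (functional_choice (fun n r => P r /\ Rabs (r - x) < / (INR n + 1))) as [u Hu].
  { intro n. apply Hacc, Rinv_0_lt_compat. pose proof (pos_INR n); lra. }
  exists u. split; [intro n; apply Hu|].
  intros eps Heps. destruct (archimed_cor1 eps Heps) as [N [HN HN0]].
  exists N. intros n Hn. unfold R_dist.
  apply Rlt_trans with (/ (INR n + 1)); [apply Hu|].
  apply Rle_lt_trans with (/ INR N); [|exact HN].
  apply Rinv_le_contravar; [apply lt_0_INR; exact HN0|].
  apply le_INR in Hn. lra.
Qed.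

Lemma exists_trivial_out_back_loop {X : TopSpace} (al be : R -> X) (C : R -> Prop) e :
  continuous_on 0 1 al -> continuous_on 0 1 be -> Icc 0 1 e -> al e = be e ->
  (forall r, C r -> Icc 0 1 r /\ al r = be r) -> ~ aw X (al e) ->
  (forall eps, eps > 0 -> exists r, C r /\ Rabs (r - e) < eps) ->
  exists t, C t /\ trivial_loop (al e) (out_back_loop al be e t).
Proof.
  intros Hal Hbe He Hee HC Hnaw Hacc.
  destruct (accumulation_sequence C e Hacc) as [t [HtC Hcv]].
  apply NNPP; intros Hnone. apply Hnaw.
  exists (fun n => out_back_loop al be e (t n)). split.
  - apply out_back_loops_null; auto.
  - intros n Htriv. apply Hnone. eauto.
Qed.

Lemma cut_set_isolating_endpoint {X : TopSpace} (al be : R -> X) A e :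
  is_path 0 1 al -> is_path 0 1 be -> homotopy_cut_set 0 1 al be A ->
  (e = 0 \/ e = 1) -> ~ aw X (al e) ->
  exists B, (forall r, B r -> A r) /\ homotopy_cut_set 0 1 al be B /\ isolated_point B e.
Proof.
  intros Hal Hbe HA He Hnaw.
  pose proof HA as [HI [_ [_ [H0 [H1 [Heq _]]]]]].
  assert (Ae : A e) by (destruct He as [-> | ->]; assumption).
  assert (Ie : Icc 0 1 e) by (apply HI, Ae).
  destruct (classic (isolated_point A e)) as [Hiso | Hniso]; [exists A; auto|].
  assert (HAe : forall r, A r /\ r <> e -> Icc 0 1 r /\ al r = be r)
    by (intros r [Ar _]; split; auto).
  destruct (exists_trivial_out_back_loop al be (fun r => A r /\ r <> e) e Hal Hbe Ie
              (Heq e Ae) HAe Hnaw (not_isolated_point_approx A e Ae Hniso))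
    as [t [[At Hte] Htriv]].
  exists (cut_out A (Rmin e t) (Rmax e t)). split; [intros r [Ar _]; exact Ar|]. split.
  - apply homotopy_cut_set_cut_out; auto; [apply Rmin_case | apply Rmax_case | ];
      auto using out_back_loop_trivial_homotopic.
  - apply (isolated_endpoint_cut_out A 0 1); auto.
Qed.

Theorem mainTheorem12 (X : TopSpace) (x0 x1 : X) (alpha beta : R -> X)
  (A : R -> Prop) :
  is_path 0 1 alpha -> is_path 0 1 beta ->
  alpha 0 = x0 -> alpha 1 = x1 -> beta 0 = x0 -> beta 1 = x1 ->
  homotopy_cut_set 0 1 alpha beta A ->
  (~ aw X x0 -> exists B, (forall r, B r -> A r) /\
      homotopy_cut_set 0 1 alpha beta B /\ isolated_point B 0) /\
  (~ aw X x1 -> exists B, (forall r, B r -> A r) /\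
      homotopy_cut_set 0 1 alpha beta B /\ isolated_point B 1) /\
  (~ aw X x0 -> ~ aw X x1 -> exists B, (forall r, B r -> A r) /\
      homotopy_cut_set 0 1 alpha beta B /\ isolated_point B 0 /\ isolated_point B 1).
Proof.
  intros Hal Hbe E0 E1 _ _ HA. subst x0 x1.
  split; [|split].
  - intros Hn0. apply cut_set_isolating_endpoint; auto.
  - intros Hn1. apply cut_set_isolating_endpoint; auto.
  - intros Hn0 Hn1.
    destruct (cut_set_isolating_endpoint alpha beta A 0 Hal Hbe HA ltac:(auto) Hn0)
      as [B0 [HB0A [HB0 Iso0]]].
    destruct (cut_set_isolating_endpoint alpha beta B0 1 Hal Hbe HB0 ltac:(auto) Hn1)
      as [B [HBB0 [HB Iso1]]].
    exists B. split; [auto|]. split; [exact HB|]. split; [|exact Iso1].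
    apply (isolated_point_sub B0); auto. apply HB.
Qed.
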